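(* Let $A\in\mathbb R^{q\times n}$, $b\in\mathbb R^q$, $c=(c_1,\dots,c_p):\mathbb R^n\to\mathbb R^p$ with each $c_i$ concave and twice continuously differentiable, and $\varepsilon>0$. For $x\in\mathbb R^n$, $y=(y^E,y^I)\in\mathbb R^q\times\mathbb R^p$, $z^I\in\mathbb R^p$ let $$G(x,y,z^I)=\begin{bmatrix}A^Ty^E+\mathcal Jc(x)^Ty^I\\ Ax-b+y^E\\ c(x)+y^I-z^I\end{bmatrix},\qquad F_\varepsilon(x,y,z^I)=\begin{bmatrix}G(x,y,z^I)\\ \Psi_\varepsilon(y^I,z^I)\end{bmatrix},$$ and $\Phi(\varepsilon)=\{(x,y^E,y^I,z^I)\in\mathbb R^n\times\mathbb R^q\times\mathbb R^p\times\mathbb R^p: F_\varepsilon(x,y,z^I)=0\}$. Let $(x,y,z^I)\in\Phi(\varepsilon)$ and suppose that the $n\times n$ matrix $$\sum_{i=1}^p y^I_i\nabla^2c_i(x)-A^TA-\mathcal Jc(x)^T\mathcal J_{z^I}\Psi_\varepsilon(y^I,z^I)\mathcal Jc(x)$$ is nonsingular. Then the Jacobian $\mathcal JF_\varepsilon(x,y,z^I)$ has full row rank, and $$T_{\Phi(\varepsilon)}(x,y,z^I)=\{d\in\mathbb R^n\times\mathbb R^{q+p}\times\mathbb R^p:\mathcal JF_\varepsilon(x,y,z^I)d=0\},$$ $$N_{\Phi(\varepsilon)}(x,y,z^I)=\widehat N_{\Phi(\varepsilon)}(x,y,z^I)=\mathcal JF_\varepsilon(x,y,z^I)^T\mathbb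 R^{n+q+p+p}.$$
   Context: $\mathcal Jc(x)$ is the $p\times n$ Jacobian of $c$. $\psi_\varepsilon(a,b)=a+b-\sqrt{a^2+b^2+2\varepsilon^2}$ (smoothing Fischer–Burmeister function) and $\Psi_\varepsilon(y^I,z^I)=(\psi_\varepsilon(y^I_1,z^I_1),\dots,\psi_\varepsilon(y^I_p,z^I_p))$; $\mathcal J_{z^I}\Psi_\varepsilon(y^I,z^I)$ is the diagonal matrix with entries $1-z^I_i/\sqrt{(y^I_i)^2+(z^I_i)^2+2\varepsilon^2}$. The Jacobian of $F_\varepsilon$ with respect to $(x,y^E,y^I,z^I)$ is $\begin{bmatrix}\sum_i y^I_i\nabla^2c_i(x) & A^T & \mathcal Jc(x)^T & 0\\ A & I & 0 & 0\\ \mathcal Jc(x) & 0 & I & -I\\ 0 & 0 & \mathcal J_{y^I}\Psi_\varepsilon & \mathcal J_{z^I}\Psi_\varepsilon\end{bmatrix}$. $T_C$, $\widehat N_C$, $N_C$ denote the tangent cone, regular normal cone and limiting normal cone of a closed set $C$. *)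

From HB Require Import structures.
From mathcomp Require Import all_boot all_order all_algebra.
From mathcomp Require Import all_classical all_reals all_analysis.
Set Implicit Arguments. Unset Strict Implicit. Unset Printing Implicit Defensive.
Import Order.TTheory GRing.Theory Num.Theory.
Import numFieldNormedType.Exports.
Local Open Scope classical_set_scope.
Local Open Scope ring_scope.

Section Defs.
Variable R : realType.

Definition evec (n : nat) (j : 'I_n) : 'cV[R]_n := delta_mx j 0.

Definition compf (n p : nat) (c : 'cV[R]_n -> 'cV[R]_p) (i : 'I_p)
  : 'cV[R]_n -> R := fun x => c x i 0.

Definition pderiv (n : nat) (f : 'cV[R]_n -> R) (j : 'I_n) : 'cV[R]_n -> R :=
  fun x => 'D_(evec j) f x.

Definition jacob (n p : nat) (c : 'cV[R]_n -> 'cV[R]_p) (x : 'cV[R]_n)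
  : 'M[R]_(p, n) := \matrix_(i, j) pderiv (compf c i) j x.

Definition hessian (n : nat) (f : 'cV[R]_n -> R) (x : 'cV[R]_n) : 'M[R]_n :=
  \matrix_(j, k) pderiv (pderiv f j) k x.

Definition C2 (n : nat) (f : 'cV[R]_n -> R) : Prop :=
  (forall x, differentiable f x) /\
  (forall j x, differentiable (pderiv f j) x) /\
  (forall j k, continuous (pderiv (pderiv f j) k)).

Definition concave_fun (n : nat) (f : 'cV[R]_n -> R) : Prop :=
  forall (x y : 'cV[R]_n) (t : R), 0 <= t <= 1 ->
    t * f x + (1 - t) * f y <= f (t *: x + (1 - t) *: y).

Definition psi (eps a b : R) : R := a + b - Num.sqrt (a ^+ 2 + b ^+ 2 + 2 * eps ^+ 2).

Definition Psi (p : nat) (eps : R) (yI zI : 'cV[R]_p) : 'cV[R]_p :=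
  \col_i psi eps (yI i 0) (zI i 0).

(** diagonal Jacobians of Psi w.r.t. y^I and z^I *)
Definition JyPsi (p : nat) (eps : R) (yI zI : 'cV[R]_p) : 'M[R]_p :=
  \matrix_(i, j) (if i == j then
     1 - yI i 0 / Num.sqrt (yI i 0 ^+ 2 + zI i 0 ^+ 2 + 2 * eps ^+ 2) else 0).
Definition JzPsi (p : nat) (eps : R) (yI zI : 'cV[R]_p) : 'M[R]_p :=
  \matrix_(i, j) (if i == j then
     1 - zI i 0 / Num.sqrt (yI i 0 ^+ 2 + zI i 0 ^+ 2 + 2 * eps ^+ 2) else 0).

(** G and F_eps; the stacked variable is (x, yE, yI, zI) in R^{n+q+p+p} *)
Definition Gmap (n q p : nat) (A : 'M[R]_(q, n)) (b : 'cV[R]_q)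
  (c : 'cV[R]_n -> 'cV[R]_p) (x : 'cV[R]_n) (yE : 'cV[R]_q) (yI zI : 'cV[R]_p)
  : 'cV[R]_(n + q + p) :=
  col_mx (col_mx (A^T *m yE + (jacob c x)^T *m yI) (A *m x - b + yE))
         (c x + yI - zI).

Definition Fmap (n q p : nat) (A : 'M[R]_(q, n)) (b : 'cV[R]_q)
  (c : 'cV[R]_n -> 'cV[R]_p) (eps : R) (x : 'cV[R]_n) (yE : 'cV[R]_q)
  (yI zI : 'cV[R]_p) : 'cV[R]_(n + q + p + p) :=
  col_mx (Gmap A b c x yE yI zI) (Psi eps yI zI).

Definition wx (n q p : nat) (w : 'cV[R]_(n + q + p + p)) : 'cV[R]_n :=
  usubmx (usubmx (usubmx w)).
Definition wyE (n q p : nat) (w : 'cV[R]_(n + q + p + p)) : 'cV[R]_q :=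
  dsubmx (usubmx (usubmx w)).
Definition wyI (n q p : nat) (w : 'cV[R]_(n + q + p + p)) : 'cV[R]_p :=
  dsubmx (usubmx w).
Definition wzI (n q p : nat) (w : 'cV[R]_(n + q + p + p)) : 'cV[R]_p :=
  dsubmx w.

Definition stack (n q p : nat) (x : 'cV[R]_n) (yE : 'cV[R]_q) (yI zI : 'cV[R]_p)
  : 'cV[R]_(n + q + p + p) := col_mx (col_mx (col_mx x yE) yI) zI.

Definition Phi (n q p : nat) (A : 'M[R]_(q, n)) (b : 'cV[R]_q)
  (c : 'cV[R]_n -> 'cV[R]_p) (eps : R) : set 'cV[R]_(n + q + p + p) :=
  [set w | Fmap A b c eps (wx w) (wyE w) (wyI w) (wzI w) = 0].

Definition JF (n q p : nat) (A : 'M[R]_(q, n)) (c : 'cV[R]_n -> 'cV[R]_p)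
  (eps : R) (x : 'cV[R]_n) (yE : 'cV[R]_q) (yI zI : 'cV[R]_p)
  : 'M[R]_(n + q + p + p, n + q + p + p) :=
  let Jc := jacob c x in
  let H := \sum_(i < p) yI i 0 *: hessian (compf c i) x in
  col_mx
   (col_mx
     (col_mx (row_mx (row_mx (row_mx H A^T) Jc^T) 0)
             (row_mx (row_mx (row_mx A 1%:M) 0) 0))
     (row_mx (row_mx (row_mx Jc 0) 1%:M) (- 1%:M)))
   (row_mx (row_mx (row_mx 0 0) (JyPsi eps yI zI)) (JzPsi eps yI zI)).

Definition dotv (N : nat) (u v : 'cV[R]_N) : R := \sum_(i < N) u i 0 * v i 0.
Definition enorm (N : nat) (u : 'cV[R]_N) : R := Num.sqrt (dotv u u).

Definition tangent_cone (N : nat) (C : set 'cV[R]_N) (x : 'cV[R]_N)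
  : set 'cV[R]_N :=
  [set d | exists (t : nat -> R) (u : nat -> 'cV[R]_N),
     [/\ (forall k, 0 < t k), t @ \oo --> 0, u @ \oo --> d &
         (forall k, C (x + t k *: u k))]].

(** regular (Frechet) normal cone: v with
    limsup_{y ->_C x, y <> x} <v, y - x> / |y - x| <= 0 ; empty if x \notin C *)
Definition regular_normal_cone (N : nat) (C : set 'cV[R]_N) (x : 'cV[R]_N)
  : set 'cV[R]_N :=
  [set v | C x /\ forall e : R, 0 < e -> exists2 delta : R, 0 < delta &
     forall y, C y -> enorm (y - x) < delta -> dotv v (y - x) <= e * enorm (y - x)].

Definition limiting_normal_cone (N : nat) (C : set 'cV[R]_N) (x : 'cV[R]_N)
  : set 'cV[R]_N :=
  [set v | C x /\ exists (xk vk : nat -> 'cV[R]_N),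
     [/\ (forall k, C (xk k)), (forall k, regular_normal_cone C (xk k) (vk k)),
         xk @ \oo --> x & vk @ \oo --> v]].

End Defs.

From HB Require Import structures.
From mathcomp Require Import all_boot all_order all_algebra.
From mathcomp Require Import all_classical all_reals all_analysis.
From mathcomp Require Import ring lra.
Import Order.TTheory GRing.Theory Num.Theory.
Import numFieldNormedType.Exports.
Set Implicit Arguments. Unset Strict Implicit. Unset Printing Implicit Defensive.
Local Open Scope classical_set_scope.
Local Open Scope ring_scope.

(* The Jacobian J of F_eps is square, so full row rank means invertibility.
   Along Phi(eps), Psi_eps(y^I, z^I) = 0 forces J_y Psi + J_z Psi = I, and block
   elimination reduces J d = 0 to the Schur complement in the hypothesis applied
   to the x-block of d; hence J is invertible.  Since c is C^2, F_eps is
   differentiable at w = (x, y, z^I) with derivative J, so every w + h in Phi(eps)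
   satisfies J h = o(|h|), i.e. h = o(|h|): w is an isolated point of Phi(eps).
   At an isolated point the tangent cone is {0} = ker J and every vector is a
   regular, hence limiting, normal, which is the range of J^T. *)

Section Negligible.
Context {R : realType} {U V : normedModType R}.
Implicit Types (P : set U) (f g : U -> V).

Definition negligible P f :=
  forall e : R, 0 < e -> \forall h \near (0 : U), P h -> `|f h| <= e * `|h|.

Lemma negligible_eq P f g :
  (forall h, P h -> f h = g h) -> negligible P g -> negligible P f.
Proof.
by move=> fg ng e e0; apply: filterS (ng e e0) => h ngh Ph; rewrite fg ?ngh.
Qed.

Lemma negligible0 P : negligible P (fun=> 0).
Proof.
by move=> e e0; apply: nearW => h _; rewrite normr0 mulr_ge0 // ltW.
Qed.

Lemma negligibleD P f g :
  negligible P f -> negligible P g -> negligible P (fun h => f h + g h).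
Proof.
move=> nf ng e e0; have e20 : 0 < e / 2 by rewrite divr_gt0.
apply: filterS2 (nf _ e20) (ng _ e20) => h nfh ngh Ph.
by rewrite (le_trans (ler_normD _ _)) //; move: (nfh Ph) (ngh Ph); lra.
Qed.

Lemma negligibleZ P (a : R) f :
  negligible P f -> negligible P (fun h => a *: f h).
Proof.
move=> nf e e0; have a0 : 0 < `|a| + 1 by rewrite ltr_wpDl.
apply: filterS (nf _ (divr_gt0 e0 a0)) => h nfh Ph.
rewrite normrZ (le_trans (ler_wpM2l (normr_ge0 a) (nfh Ph))) // mulrA.
by rewrite ler_wpM2r // mulrCA ler_piMr ?ltW // ltr_pdivrMr // mul1r ltrDl.
Qed.

Lemma negligible_sum (I : Type) (r : seq I) (Pr : pred I) P (F : I -> U -> V) :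
  (forall i, Pr i -> negligible P (F i)) ->
  negligible P (fun h => \sum_(i <- r | Pr i) F i h).
Proof.
move=> nF; elim: r => [|i r IH].
  by apply: negligible_eq (negligible0 P) => h _; rewrite big_nil.
case Pi: (Pr i); last by apply: negligible_eq IH => h _; rewrite big_cons Pi.
by apply: negligible_eq (negligibleD (nF i Pi) IH) => h _; rewrite big_cons Pi.
Qed.

End Negligible.

Section NegligibleCalculus.
Context {R : realType} {U : normedModType R}.

Lemma negligible_id_eq0 P : negligible P id -> \forall h \near (0 : U), P h -> h = 0.
Proof.
move=> nid; apply: filterS (nid (1 / 2) _) => [h le_h Ph|]; last by lra.
have := le_h Ph; have := normr_ge0 h => h0 hh.
by apply/normr0_eq0; lra.
Qed.

Lemma cvg0_contraction {W : normedModType R} (g : U -> W) :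
  (forall h, `|g h| <= `|h|) -> g h @[h --> (0 : U)] --> (0 : W).
Proof.
move=> gle; apply/cvgr0Pnorm_lt => e e0; near=> h.
by rewrite (le_lt_trans (gle h)) //; near: h; exact: nbhs0_lt.
Unshelve. all: by end_near. Qed.

Lemma negligible_comp_contraction {V W : normedModType R} P
    (g : U -> W) (Q : W -> V) :
  (forall h, `|g h| <= `|h|) -> negligible setT Q -> negligible P (Q \o g).
Proof.
move=> gle nQ e e0.
have Qg : \forall h \near 0, setT (g h) -> `|Q (g h)| <= e * `|g h|.
  exact: cvg0_contraction gle _ (nQ e e0).
apply: filterS Qg => h Qh _.
exact: le_trans (Qh I) (ler_wpM2l (ltW e0) (gle h)).
Qed.

Lemma negligibleMl (P : set U) (a : R) (f : U -> R) :
  negligible P f -> negligible P (fun h => a * f h).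
Proof. exact: negligibleZ. Qed.

Lemma negligible_mul (P : set U) (f g : U -> R) :
  f h @[h --> (0 : U)] --> 0 -> (forall h, `|g h| <= `|h|) ->
  negligible P (fun h => f h * g h).
Proof.
move=> f0 gle e e0; near=> h => _; rewrite normrM ler_pM //.
by near: h; exact: cvgr0_norm_le.
Unshelve. all: by end_near. Qed.

Lemma cvg0_increment {W : normedModType R} (f : W -> R) (x : W) (g : U -> W) :
  {for x, continuous f} -> (forall h, `|g h| <= `|h|) ->
  f (x + g h) - f x @[h --> (0 : U)] --> 0.
Proof.
move=> fx gle; rewrite -(subrr (f x)); apply: cvgB; last exact: cvg_cst.
have xg : x + g h @[h --> (0 : U)] --> x.
  rewrite -[in X in _ --> X](addr0 x).
  by apply: cvgD; [exact: cvg_cst | exact: cvg0_contraction].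
exact: cvg_comp xg fx.
Qed.

End NegligibleCalculus.

Section ColumnVectors.
Context {R : realType}.

Lemma ler_norm_entry m n (M : 'M[R]_(m, n)) i j : `|M i j| <= `|M|.
Proof.
rewrite [leRHS]mx_normrE.
exact: (le_bigmax _ (fun ij : 'I_m * 'I_n => `|M ij.1 ij.2|) (i, j)).
Qed.

Lemma ler_norm_entrywise m n (M : 'M[R]_(m, n)) (a : R) :
  0 <= a -> (forall i j, `|M i j| <= a) -> `|M| <= a.
Proof. by move=> a0 Ma; rewrite [leLHS]mx_normrE; apply: bigmax_le => // -[i j] _. Qed.

Lemma ler_norm_usubmx m1 m2 n (M : 'M[R]_(m1 + m2, n)) : `|usubmx M| <= `|M|.
Proof. by apply: ler_norm_entrywise => // i j; rewrite mxE ler_norm_entry. Qed.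

Lemma ler_norm_dsubmx m1 m2 n (M : 'M[R]_(m1 + m2, n)) : `|dsubmx M| <= `|M|.
Proof. by apply: ler_norm_entrywise => // i j; rewrite mxE ler_norm_entry. Qed.

Context {U : normedModType R}.
Implicit Type P : set U.

Lemma negligible_entry P m (f : U -> 'cV[R]_m) i :
  negligible P f -> negligible P (fun h => f h i 0).
Proof.
move=> nf e e0; apply: filterS (nf e e0) => h nfh Ph.
exact: le_trans (ler_norm_entry _ _ _) (nfh Ph).
Qed.

Lemma negligible_entries P m (f : U -> 'cV[R]_m) :
  (forall i, negligible P (fun h => f h i 0)) -> negligible P f.
Proof.
move=> nf e e0.
have : \forall h \near 0, forall i, P h -> `|f h i 0| <= e * `|h|.
  by apply: filter_forall => i; exact: nf.
apply: filterS => h nfh Ph; apply: ler_norm_entrywise => [|i j].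
  by rewrite mulr_ge0 // ltW.
by rewrite (ord1 j) nfh.
Qed.

Lemma negligible_mulmx P k m (M : 'M[R]_(k, m)) (f : U -> 'cV[R]_m) :
  negligible P f -> negligible P (fun h => M *m f h).
Proof.
move=> nf; apply: negligible_entries => i.
have := negligible_sum (index_enum 'I_m) (Pr := xpredT)
  (fun j _ => negligibleMl (M i j) (negligible_entry j nf)).
by apply: negligible_eq => h _; rewrite mxE.
Qed.

Lemma negligible_col_mx P m1 m2 (f : U -> 'cV[R]_m1) (g : U -> 'cV[R]_m2) :
  negligible P f -> negligible P g -> negligible P (fun h => col_mx (f h) (g h)).
Proof.
move=> nf ng; apply: negligible_entries => i; rewrite -(splitK i).
case: (fintype.split i) => j /=.
  by apply: negligible_eq (negligible_entry j nf) => h _; rewrite col_mxEu.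
by apply: negligible_eq (negligible_entry j ng) => h _; rewrite col_mxEd.
Qed.

End ColumnVectors.

Section IsolatedPoints.
Context {R : realType} {N : nat} (C : set 'cV[R]_N) (w : 'cV[R]_N).

Lemma isolatedP : isolated C w <-> C w /\ \forall y \near w, C y -> y = w.
Proof.
split=> [[/set_mem Cw [V Vw VC]]|[Cw iso]]; split=> //.
  by apply: filterS Vw => y Vy Cy; have: (V `&` C) y by []; rewrite VC.
  by apply/mem_set.
exists [set y | C y -> y = w] => //; apply/seteqP.
by split=> [y [] /[apply] //|y ->].
Qed.

Lemma isolated_near0 :
  C w -> (\forall h \near (0 : 'cV[R]_N), C (w + h) -> h = 0) -> isolated C w.
Proof.
move=> Cw /nbhs_norm0P[d /= d0 iso0]; apply/isolatedP; split=> //.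
apply/nbhs_normP; exists d => //= y wy Cy; apply/eqP; rewrite -subr_eq0; apply/eqP.
by apply: iso0; [rewrite /= distrC | rewrite addrC addrNK].
Qed.

End IsolatedPoints.

Section ConesAtIsolatedPoints.
Context {R : realType} {N : nat}.
Implicit Types (u v : 'cV[R]_N) (C : set 'cV[R]_N).

Lemma dotv0 v : dotv v 0 = 0.
Proof. by rewrite /dotv big1 // => i _; rewrite mxE mulr0. Qed.

Lemma enorm0 : enorm (0 : 'cV[R]_N) = 0.
Proof. by rewrite /enorm dotv0 sqrtr0. Qed.

Lemma ler_norm_enorm v : `|v| <= enorm v.
Proof.
apply: ler_norm_entrywise => [|i j]; first exact: sqrtr_ge0.
rewrite (ord1 j) /enorm /dotv -sqrtr_sqr ler_sqrt; last first.
  by apply: sumr_ge0 => k _; rewrite -expr2 sqr_ge0.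
by rewrite (bigD1 i) //= expr2 lerDl sumr_ge0 // => k _; rewrite -expr2 sqr_ge0.
Qed.

Variables (C : set 'cV[R]_N) (w : 'cV[R]_N).
Hypothesis isoCw : isolated C w.

Lemma tangent_cone_isolated : tangent_cone C w = [set 0].
Proof.
have [Cw iso] := (isolatedP C w).1 isoCw.
apply/seteqP; split=> [d [t [u [t0 t_cvg u_cvg Ctu]]]|_ ->] /=; last first.
  exists harmonic, (fun=> 0); split=> //; first exact: harmonic_gt0.
  - exact: cvg_harmonic.
  - exact: cvg_cst.
  - by move=> k; rewrite scaler0 addr0.
have tu_cvg : w + t k *: u k @[k --> \oo] --> w.
  rewrite -[in X in _ --> X](addr0 w) -(scale0r d).
  by apply: cvgD; [exact: cvg_cst | exact: cvgZ].
have u0 : {near \oo, (fun=> 0 : 'cV[R]_N) =1 u}.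
  have : \forall k \near \oo, C (w + t k *: u k) -> w + t k *: u k = w.
    exact: tu_cvg _ iso.
  apply: filterS => k /(_ (Ctu k)) /eqP.
  by rewrite -subr_eq0 addrAC subrr add0r scaler_eq0 gt_eqF //= => /eqP ->.
have u_cvg0 : u @ \oo --> (0 : 'cV[R]_N).
  exact: cvg_trans (near_eq_cvg u0) (cvg_cst _).
exact: cvg_unique u_cvg u_cvg0.
Qed.

Lemma regular_normal_cone_isolated : regular_normal_cone C w = setT.
Proof.
have [Cw /nbhs_normP[d /= d0 iso]] := (isolatedP C w).1 isoCw.
apply/seteqP; split=> // v _; split=> // e e0; exists d => // y Cy yd.
have -> : y - w = 0.
  apply/eqP; rewrite subr_eq0; apply/eqP/iso => //.
  by rewrite /ball_ /= distrC (le_lt_trans (ler_norm_enorm _)).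
by rewrite dotv0 enorm0 mulr0.
Qed.

Lemma limiting_normal_cone_isolated : limiting_normal_cone C w = setT.
Proof.
have [Cw _] := (isolatedP C w).1 isoCw.
apply/seteqP; split=> // v _; split=> //.
exists (fun=> w), (fun=> v); split=> //; try exact: cvg_cst.
by move=> _; rewrite regular_normal_cone_isolated.
Qed.

End ConesAtIsolatedPoints.

Lemma inj_unitmx {F : fieldType} {N : nat} (M : 'M[F]_N) :
  (forall d : 'cV[F]_N, M *m d = 0 -> d = 0) -> M \in unitmx.
Proof.
move=> Minj; rewrite -unitmx_tr -row_free_unit; apply: inj_row_free => v vM0.
apply: trmx_inj; rewrite trmx0; apply: Minj.
by rewrite -[M]trmxK -trmx_mul vM0 trmx0.
Qed.

Lemma ker_unitmx {F : fieldType} {N : nat} (M : 'M[F]_N) :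
  M \in unitmx -> [set d : 'cV[F]_N | M *m d = 0] = [set 0].
Proof.
move=> uM; apply/seteqP; split=> [d /= Md0|_ ->]; last exact: mulmx0.
by rewrite -(mulKmx uM d) Md0 mulmx0.
Qed.

Lemma range_unitmx {F : fieldType} {N : nat} (M : 'M[F]_N) :
  M \in unitmx -> [set M *m u | u in [set: 'cV[F]_N]] = setT.
Proof.
by move=> uM; apply/seteqP; split=> // v _; exists (invmx M *m v); rewrite ?mulKVmx.
Qed.

Lemma mulmx_diag_col {F : pzRingType} {m : nat} (f : 'I_m -> F) (v : 'cV[F]_m) i :
  ((\matrix_(i0, j) (if i0 == j then f i0 else 0)) *m v) i 0 = f i * v i 0.
Proof.
rewrite mxE (bigD1 i) //= mxE eqxx big1 ?addr0 // => j /negbTE ji.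
by rewrite mxE eq_sym ji mul0r.
Qed.

Section SmoothedFischerBurmeister.
Context {R : realType} (eps : R).
Hypothesis eps_gt0 : 0 < eps.

Lemma psi_eq0 (a b : R) : psi eps a b = 0 ->
  [/\ a * b = eps ^+ 2, 0 < a + b & Num.sqrt (a ^+ 2 + b ^+ 2 + 2 * eps ^+ 2) = a + b].
Proof.
rewrite /psi => /eqP; rewrite subr_eq0 => /eqP abE.
have abE2 : (a + b) ^+ 2 = a ^+ 2 + b ^+ 2 + 2 * eps ^+ 2.
  by rewrite abE sqr_sqrtr // !addr_ge0 ?sqr_ge0 // mulr_ge0 // sqr_ge0.
have ab : a * b = eps ^+ 2 by move: abE2; rewrite !expr2; nra.
split=> //; rewrite lt_neqAle abE sqrtr_ge0 andbT -abE.
by apply/eqP => ab0; move: abE2; rewrite -ab0 !expr2; have := eps_gt0; nra.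
Qed.

Variables (p : nat) (yI zI : 'cV[R]_p).
Hypothesis psi_yz : forall i, psi eps (yI i 0) (zI i 0) = 0.

Lemma JyPsi_mulmx (v : 'cV[R]_p) i :
  (JyPsi eps yI zI *m v) i 0 = zI i 0 / (yI i 0 + zI i 0) * v i 0.
Proof.
rewrite mulmx_diag_col; have [_ /lt0r_neq0 yz0 ->] := psi_eq0 (psi_yz i).
by congr (_ * _); field.
Qed.

Lemma JzPsi_mulmx (v : 'cV[R]_p) i :
  (JzPsi eps yI zI *m v) i 0 = yI i 0 / (yI i 0 + zI i 0) * v i 0.
Proof.
rewrite mulmx_diag_col; have [_ /lt0r_neq0 yz0 ->] := psi_eq0 (psi_yz i).
by congr (_ * _); field.
Qed.

Lemma JyPsiD_JzPsi : JyPsi eps yI zI + JzPsi eps yI zI = 1%:M.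
Proof.
apply/matrixP => i j; rewrite !mxE; case: eqP => [_|_]; last by rewrite addr0.
have [_ /lt0r_neq0 yz0 ->] := psi_eq0 (psi_yz i).
by rewrite /=; field.
Qed.

End SmoothedFischerBurmeister.

Section FirstOrderExpansion.
Context {R : realType} {n : nat}.

Lemma diff_pderiv (f : 'cV[R]_n -> R) (x v : 'cV[R]_n) :
  differentiable f x -> 'd f x v = \sum_j v j 0 * pderiv f j x.
Proof.
move=> df; under [RHS]eq_bigr do rewrite /pderiv deriveE //.
rewrite {1}(matrix_sum_delta v) linear_sum /=.
by apply: eq_bigr => j _; rewrite big_ord1 linearZ /= (ord1 0).
Qed.

Lemma negligible_taylor1 (f : 'cV[R]_n -> R) (x : 'cV[R]_n) :
  differentiable f x ->
  negligible setT (fun v => f (x + v) - f x - \sum_j v j 0 * pderiv f j x).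
Proof.
move=> df e e0; have /eqaddoP/(_ e e0) := diff_locally df.
apply: filterS => v + _; rewrite -diff_pderiv //=.
by rewrite !fctE [v + x]addrC opprD addrA.
Qed.

End FirstOrderExpansion.

Section StackedVariable.
Context {R : realType} {n q p : nat}.
Local Notation N := (n + q + p + p)%N.
Implicit Type h : 'cV[R]_N.

Lemma stackK h : stack (wx h) (wyE h) (wyI h) (wzI h) = h.
Proof. by rewrite /stack /wx /wyE /wyI /wzI !vsubmxK. Qed.

Lemma stack_blocks (x : 'cV[R]_n) (yE : 'cV[R]_q) (yI zI : 'cV[R]_p) :
  let w := stack x yE yI zI in [/\ wx w = x, wyE w = yE, wyI w = yI & wzI w = zI].
Proof. by rewrite /wx /wyE /wyI /wzI /stack !col_mxKu !col_mxKd. Qed.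

Lemma stackD (x : 'cV[R]_n) (yE : 'cV[R]_q) (yI zI : 'cV[R]_p) h :
  stack x yE yI zI + h = stack (x + wx h) (yE + wyE h) (yI + wyI h) (zI + wzI h).
Proof. by rewrite -{1}(stackK h) /stack !add_col_mx. Qed.

Lemma ler_norm_wx h : `|wx h| <= `|h|.
Proof. by rewrite !(le_trans (ler_norm_usubmx _)). Qed.

Lemma ler_norm_wyI h : `|wyI h| <= `|h|.
Proof. by rewrite (le_trans (ler_norm_dsubmx _)) ?ler_norm_usubmx. Qed.

Lemma ler_norm_wzI h : `|wzI h| <= `|h|.
Proof. exact: ler_norm_dsubmx. Qed.

End StackedVariable.

Section KKTSystem.
Context {R : realType} {n q p : nat} (A : 'M[R]_(q, n)) (b : 'cV[R]_q)
  (c : 'cV[R]_n -> 'cV[R]_p) (eps : R).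

Lemma Phi_stack_eqs x yE yI zI : Phi A b c eps (stack x yE yI zI) ->
  [/\ A^T *m yE + (jacob c x)^T *m yI = 0, A *m x - b + yE = 0,
      c x + yI - zI = 0 & forall i, psi eps (yI i 0) (zI i 0) = 0].
Proof.
rewrite /Phi /=; have [-> -> -> ->] := stack_blocks x yE yI zI.
move/eqP; rewrite /Fmap /Gmap !col_mx_eq0.
move=> /andP[/andP[/andP[/eqP -> /eqP ->] /eqP ->] /eqP Psi0].
by split=> // i; have := congr1 (fun M : 'cV[R]_p => M i 0) Psi0; rewrite !mxE.
Qed.

Variables (x : 'cV[R]_n) (yE : 'cV[R]_q) (yI zI : 'cV[R]_p).
Local Notation N := (n + q + p + p)%N.
Local Notation Jc := (jacob c x).
Local Notation H := (\sum_(i < p) yI i 0 *: hessian (compf c i) x).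
Local Notation Dy := (JyPsi eps yI zI).
Local Notation Dz := (JzPsi eps yI zI).
Local Notation J := (JF A c eps x yE yI zI).

Lemma JF_mulmx (d : 'cV[R]_N) : J *m d =
  col_mx (col_mx (col_mx (H *m wx d + A^T *m wyE d + Jc^T *m wyI d)
                         (A *m wx d + wyE d))
                 (Jc *m wx d + wyI d - wzI d))
         (Dy *m wyI d + Dz *m wzI d).
Proof.
rewrite -{1}(stackK d) /JF /stack !mul_col_mx !mul_row_col.
by rewrite !mul0mx !mul1mx !addr0 !add0r mulNmx mul1mx.
Qed.

Hypotheses (eps_gt0 : 0 < eps) (psi_yz : forall i, psi eps (yI i 0) (zI i 0) = 0).
Hypothesis schur_unit : H - A^T *m A - Jc^T *m Dz *m Jc \in unitmx.

Lemma JF_inj (d : 'cV[R]_N) : J *m d = 0 -> d = 0.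
Proof.
rewrite JF_mulmx => /eqP; rewrite !col_mx_eq0.
move=> /andP[/andP[/andP[/eqP row1 /eqP row2] /eqP row3] /eqP row4].
have dyE : wyE d = - (A *m wx d) by apply/eqP; rewrite -addr_eq0 addrC row2.
have dzI : wzI d = Jc *m wx d + wyI d by apply/eqP; rewrite eq_sym -subr_eq0 row3.
have dyI : wyI d = - (Dz *m (Jc *m wx d)).
  apply/eqP; rewrite -addr_eq0 addrC; apply/eqP.
  by rewrite -row4 dzI mulmxDr addrCA -mulmxDl JyPsiD_JzPsi // mul1mx.
have schur_dx : (H - A^T *m A - Jc^T *m Dz *m Jc) *m wx d = 0.
  by rewrite !mulmxBl -!mulmxA -row1 dyE dyI !mulmxN.
have dx : wx d = 0 by rewrite -(mulKmx schur_unit (wx d)) schur_dx mulmx0.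
by rewrite -(stackK d) dzI dyI dyE dx !mulmx0 !oppr0 !add0r /stack !col_mx0.
Qed.

Lemma unitmx_JF : J \in unitmx.
Proof. exact: inj_unitmx JF_inj. Qed.

End KKTSystem.

Lemma negligible_jacob_taylor1 {R : realType} {n p : nat}
    (c : 'cV[R]_n -> 'cV[R]_p) (x : 'cV[R]_n) :
  (forall i, differentiable (compf c i) x) ->
  negligible setT (fun v => c (x + v) - c x - jacob c x *m v).
Proof.
move=> dc; apply: negligible_entries => i.
apply: negligible_eq (negligible_taylor1 (dc i)) => v _.
by rewrite !mxE; congr (_ - _); apply: eq_bigr => j _; rewrite mxE mulrC.
Qed.

Section Linearization.
Context {R : realType} {n q p : nat} (A : 'M[R]_(q, n)) (b : 'cV[R]_q)
  (c : 'cV[R]_n -> 'cV[R]_p) (eps : R)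
  (x : 'cV[R]_n) (yE : 'cV[R]_q) (yI zI : 'cV[R]_p).
Local Notation N := (n + q + p + p)%N.
Local Notation Jc := (jacob c x).
Local Notation H := (\sum_(i < p) yI i 0 *: hessian (compf c i) x).
Local Notation Dy := (JyPsi eps yI zI).
Local Notation Dz := (JzPsi eps yI zI).
Local Notation J := (JF A c eps x yE yI zI).
Local Notation w := (stack x yE yI zI).
Local Notation Pw := (fun h : 'cV[R]_N => Phi A b c eps (w + h)).

Hypotheses (Phi_w : Phi A b c eps w) (eps_gt0 : 0 < eps).
Hypothesis dc : forall i, differentiable (compf c i) x.
Hypothesis dc2 : forall i j, differentiable (pderiv (compf c i) j) x.

Let wx_le (h : 'cV[R]_N) : `|wx h| <= `|h| := ler_norm_wx h.
Let wyI_le i (h : 'cV[R]_N) : `|wyI h i 0| <= `|h| :=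
  le_trans (ler_norm_entry _ _ _) (ler_norm_wyI h).
Let wzI_le i (h : 'cV[R]_N) : `|wzI h i 0| <= `|h| :=
  le_trans (ler_norm_entry _ _ _) (ler_norm_wzI h).

Lemma Phi_shift_eqs h : Pw h ->
  [/\ A^T *m (yE + wyE h) + (jacob c (x + wx h))^T *m (yI + wyI h) = 0,
      A *m (x + wx h) - b + (yE + wyE h) = 0,
      c (x + wx h) + (yI + wyI h) - (zI + wzI h) = 0 &
      forall i, psi eps ((yI + wyI h) i 0) ((zI + wzI h) i 0) = 0].
Proof. by rewrite /= stackD => /Phi_stack_eqs. Qed.

Lemma negligible_row2 : negligible Pw (fun h => A *m wx h + wyE h).
Proof.
apply: negligible_eq (negligible0 _) => h /Phi_shift_eqs[_ + _ _].
have [_ + _ _] := Phi_stack_eqs Phi_w; rewrite mulmxDr.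
move=> /matrixP eq_w /matrixP eq_wh; apply/matrixP => i j.
by move: (eq_w i j) (eq_wh i j); rewrite !mxE; lra.
Qed.

Lemma negligible_row3 : negligible Pw (fun h => Jc *m wx h + wyI h - wzI h).
Proof.
have := negligibleZ (-1)
  (negligible_comp_contraction Pw wx_le (negligible_jacob_taylor1 dc)).
apply: negligible_eq => h /Phi_shift_eqs[_ _ + _].
have [_ _ + _] := Phi_stack_eqs Phi_w.
move=> /matrixP eq_w /matrixP eq_wh; apply/matrixP => i j.
by move: (eq_w i j) (eq_wh i j); rewrite !mxE; lra.
Qed.

Lemma negligible_row4 : negligible Pw (fun h => Dy *m wyI h + Dz *m wzI h).
Proof.
have [_ _ _ psi_w] := Phi_stack_eqs Phi_w.
apply: negligible_entries => i.
have := negligibleMl (- (yI i 0 + zI i 0)^-1)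
  (negligible_mul Pw (cvg0_contraction (wyI_le i)) (wzI_le i)).
apply: negligible_eq => h /Phi_shift_eqs[_ _ _ /(_ i)/(psi_eq0 eps_gt0)[yz_h _ _]].
have [yz /lt0r_neq0 yz0 _] := psi_eq0 eps_gt0 (psi_w i).
rewrite [(yI + _) i 0]mxE [(zI + _) i 0]mxE in yz_h.
rewrite [LHS]mxE (JyPsi_mulmx eps_gt0) // (JzPsi_mulmx eps_gt0) //.
have -> : wyI h i 0 * wzI h i 0 = - (zI i 0 * wyI h i 0 + yI i 0 * wzI h i 0).
  by move: yz yz_h; rewrite !expr2; nra.
by field.
Qed.

Lemma negligible_hessian_remainder :
  negligible setT (fun v => H *m v - (jacob c (x + v) - Jc)^T *m yI).
Proof.
apply: negligible_entries => j.
have := negligible_sum (index_enum 'I_p) (Pr := xpredT)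
  (fun i _ => negligibleMl (- yI i 0) (negligible_taylor1 (dc2 i j))).
apply: negligible_eq => v _.
rewrite mulmx_suml [LHS]mxE summxE [X in _ + X]mxE [X in _ - X]mxE -sumrB.
apply: eq_bigr => i _; rewrite -scalemxAl !mxE.
under eq_bigr do rewrite mxE mulrC.
by ring.
Qed.

Lemma negligible_jacob_increment :
  negligible Pw (fun h => (jacob c (x + wx h) - Jc)^T *m wyI h).
Proof.
apply: negligible_entries => j.
have := negligible_sum (index_enum 'I_p) (Pr := xpredT) (fun i _ =>
  negligible_mul Pw (cvg0_increment (differentiable_continuous (dc2 i j)) wx_le)
    (wyI_le i)).
by apply: negligible_eq => h _; rewrite mxE; apply: eq_bigr => i _; rewrite !mxE.
Qed.

Lemma negligible_row1 :
  negligible Pw (fun h => H *m wx h + A^T *m wyE h + Jc^T *m wyI h).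
Proof.
have := negligibleD
  (negligible_comp_contraction Pw wx_le negligible_hessian_remainder)
  (negligibleZ (-1) negligible_jacob_increment).
apply: negligible_eq => h /Phi_shift_eqs[+ _ _ _].
have [+ _ _ _] := Phi_stack_eqs Phi_w.
rewrite /= !linearB /= !mulmxBl !mulmxDr scaleN1r.
move=> /matrixP eq_w /matrixP eq_wh; apply/matrixP => i j.
by move: (eq_w i j) (eq_wh i j); rewrite !mxE; lra.
Qed.

Hypothesis schur_unit : H - A^T *m A - Jc^T *m Dz *m Jc \in unitmx.

Lemma isolated_Phi : isolated (Phi A b c eps) w.
Proof.
have [_ _ _ psi_w] := Phi_stack_eqs Phi_w.
have negligible_J : negligible Pw (fun h => J *m h).
  apply: negligible_eq (negligible_col_mx (negligible_col_mx (negligible_col_mx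
    negligible_row1 negligible_row2) negligible_row3) negligible_row4) => h _.
  exact: JF_mulmx.
apply: isolated_near0 Phi_w (negligible_id_eq0 _).
apply: negligible_eq (negligible_mulmx (invmx J) negligible_J) => h _.
by rewrite mulKmx // unitmx_JF.
Qed.

End Linearization.

Unset Implicit Arguments.

Theorem proposition4p1 (R : realType) (n q p : nat)
  (A : 'M[R]_(q, n)) (b : 'cV[R]_q) (c : 'cV[R]_n -> 'cV[R]_p) (eps : R)
  (x : 'cV[R]_n) (yE : 'cV[R]_q) (yI zI : 'cV[R]_p) :
  (forall i : 'I_p, concave_fun (compf c i) /\ C2 (compf c i)) ->
  0 < eps ->
  Phi A b c eps (stack x yE yI zI) ->
  (\sum_(i < p) yI i 0 *: hessian (compf c i) x - A^T *m A
     - (jacob c x)^T *m JzPsi eps yI zI *m jacob c x) \in unitmx ->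
  let J := JF A c eps x yE yI zI in
  [/\ \rank J = (n + q + p + p)%N,
      tangent_cone (Phi A b c eps) (stack x yE yI zI) = [set d | J *m d = 0],
      limiting_normal_cone (Phi A b c eps) (stack x yE yI zI)
        = regular_normal_cone (Phi A b c eps) (stack x yE yI zI) &
      regular_normal_cone (Phi A b c eps) (stack x yE yI zI)
        = [set J^T *m u | u in [set: 'cV[R]_(n + q + p + p)]]].
Proof.
move=> c_C2 eps_gt0 Phi_w schur_unit J.
have dc i : differentiable (compf c i) x := (c_C2 i).2.1 x.
have dc2 i j : differentiable (pderiv (compf c i) j) x := (c_C2 i).2.2.1 j x.
have [_ _ _ psi_w] := Phi_stack_eqs Phi_w.
have uJ : J \in unitmx := unitmx_JF yE eps_gt0 psi_w schur_unit.
have iso := isolated_Phi Phi_w eps_gt0 dc dc2 schur_unit.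
rewrite tangent_cone_isolated // limiting_normal_cone_isolated //.
rewrite regular_normal_cone_isolated // ker_unitmx // range_unitmx ?unitmx_tr //.
by split=> //; exact: mxrank_unit.
Qed.
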